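(* Let $L$ be a lattice with discriminant $d$, and let $G$ be a finite group acting on $L$ preserving the bilinear form. If $L^G\neq0$, then the restriction of the bilinear form makes $L^G$ a lattice whose discriminant divides $(d|G|)^r$, where $r=\mathrm{rk}(L^G)$.
   Context: A lattice is a free abelian group of finite positive rank with a non-degenerate integral symmetric bilinear form; its discriminant is the determinant of the Gram matrix in a $\mathbb{Z}$-basis. $L^G$ is the subgroup of $G$-invariant elements. *)

From HB Require Import structures.
From mathcomp Require Import all_boot all_order all_algebra all_fingroup.
Set Implicit Arguments. Unset Strict Implicit. Unset Printing Implicit Defensive.
Import GRing.Theory Num.Theory.
Local Open Scope ring_scope.

(* A lattice of rank n is modelled as Z^n (column vectors 'cV[int]_n) with
   bilinear form (u, v) |-> u^T B v, B an integral symmetric Gram matrix. *)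

Definition form (n : nat) (B : 'M[int]_n) (u v : 'cV[int]_n) : int :=
  (u^T *m B *m v) ord0 ord0.

Definition is_lattice_form (n : nat) (B : 'M[int]_n) : Prop :=
  B^T = B /\ \det B != 0.

Definition form_preserving_action (gT : finGroupType) (G : {group gT})
  (n : nat) (rho : gT -> 'M[int]_n) (B : 'M[int]_n) : Prop :=
  rho 1%g = 1%:M /\
  (forall x y, x \in G -> y \in G -> rho (x * y)%g = rho x *m rho y) /\
  (forall g, g \in G -> (rho g)^T *m B *m rho g = B).

Definition G_invariant (gT : finGroupType) (G : {group gT}) (n : nat)
  (rho : gT -> 'M[int]_n) (v : 'cV[int]_n) : Prop :=
  forall g, g \in G -> rho g *m v = v.

Definition is_Zbasis_of_invariants (gT : finGroupType) (G : {group gT})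
  (n : nat) (rho : gT -> 'M[int]_n) (r : nat) (b : 'M[int]_(n, r)) : Prop :=
  (forall j : 'I_r, G_invariant G rho (col j b)) /\
  (forall c : 'cV[int]_r, b *m c = 0 -> c = 0) /\
  (forall v : 'cV[int]_n, G_invariant G rho v -> exists c : 'cV[int]_r, v = b *m c).

Definition gram (n r : nat) (B : 'M[int]_n) (b : 'M[int]_(n, r)) : 'M[int]_r :=
  b^T *m B *m b.

From HB Require Import structures.
From mathcomp Require Import all_boot all_order all_algebra all_fingroup.
Import GRing.Theory Num.Theory.
Set Implicit Arguments.
Unset Strict Implicit.
Unset Printing Implicit Defensive.
Local Open Scope ring_scope.

(* Let N be the sum of the rho g over G. Its columns are invariant, N^T B = B N,
   and N v = |G| v for invariant v. The invariants form the kernel of N - |G|,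
   which the Smith normal form shows to be a saturated sublattice, so every
   Z-basis b of L^G has an integral left inverse W. Then b W N = N and
     gram(b) (W N adj(B) W^T) = b^T N^T B adj(B) W^T = det B |G| b^T W^T
                              = det B |G| I,
   so det gram(b) is non-zero and divides (det B |G|)^r. *)

Lemma col_mul (R : pzSemiRingType) m n p (j : 'I_p) (A : 'M[R]_(m, n)) B :
  col j (A *m B) = A *m col j B.
Proof. by rewrite !colE mulmxA. Qed.

Lemma col_matrixP (T : Type) m n (A B : 'M[T]_(m, n)) :
  (forall j, col j A = col j B) <-> A = B.
Proof.
split=> [eqAB|-> //]; apply/matrixP => i j.
by have /colP/(_ i) := eqAB j; rewrite !mxE.
Qed.

Lemma diag_kernel_basis (R : idomainType) n (d : 'rV[R]_n) :
  exists r (S : 'M[R]_(n, r)),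
    [/\ S^T *m S = 1%:M, diag_mx d *m S = 0 &
        forall u : 'cV_n, diag_mx d *m u = 0 -> S *m (S^T *m u) = u].
Proof.
pose Z := [set i | d 0 i == 0].
pose S : 'M[R]_(n, #|Z|) := colsub enum_val 1%:M.
have trS : S^T = rowsub enum_val 1%:M by rewrite trmx_mxsub trmx1.
exists #|Z|, S; split.
- rewrite trS mul_rowsub_mx mul1mx; apply/matrixP => k l.
  by rewrite !mxE (inj_eq enum_val_inj).
- apply/matrixP => i k; rewrite mul_diag_mx !mxE.
  case: eqP => [->|_]; last by rewrite mulr0.
  by have := enum_valP k; rewrite inE => /eqP->; rewrite mul0r.
move=> u /matrixP du0; apply/matrixP => i k.
rewrite ord1 trS mul_rowsub_mx mul1mx mxE; have [iZ | iNZ] := boolP (i \in Z).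
  rewrite (bigD1 (enum_rank_in iZ i)) //= big1 => [|l].
    by rewrite !mxE enum_rankK_in // eqxx mul1r addr0.
  rewrite !mxE => nl; case: eqP => [Ei|]; last by rewrite mul0r.
  suff: enum_rank_in iZ i == l by rewrite eq_sym (negbTE nl).
  by apply/eqP/enum_val_inj; rewrite enum_rankK_in.
rewrite big1 => [|l _]; last first.
  rewrite !mxE; case: eqP => [Ei|]; last by rewrite mul0r.
  by move: iNZ; rewrite Ei enum_valP.
have := du0 i 0; rewrite mul_diag_mx !mxE => /eqP; rewrite mulf_eq0.
by move: iNZ; rewrite inE => /negbTE-> /eqP->.
Qed.

Lemma int_kernel_basis n (A : 'M[int]_n) :
  exists r (b : 'M[int]_(n, r)) (W : 'M[int]_(r, n)),
    [/\ W *m b = 1%:M, A *m b = 0 &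
        forall v : 'cV_n, A *m v = 0 -> exists c, v = b *m c].
Proof.
have [L uL [R uR [d _ defA]]] := int_Smith_normal_form A.
have {defA} defA : A = L *m diag_mx (\row_i d`_i) *m R.
  rewrite defA; congr (_ *m _ *m _); apply/matrixP => i j.
  by rewrite !mxE -val_eqE.
have [r [S [StS DS kerD]]] := diag_kernel_basis (\row_(i < n) d`_i).
exists r, (invmx R *m S), (S^T *m R); split.
- by rewrite -mulmxA mulKVmx.
- by rewrite defA -!mulmxA mulKVmx // DS mulmx0.
move=> v; rewrite defA -!mulmxA => /(congr1 (mulmx (invmx L))).
rewrite mulKmx // mulmx0 => /kerD Ru.
by exists (S^T *m (R *m v)); rewrite -mulmxA Ru mulKmx.
Qed.

Lemma mulmxnI (R : numDomainType) m n k : (0 < k)%N ->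
  injective (fun A : 'M[R]_(m, n) => A *+ k).
Proof.
move=> k_gt0 A B /matrixP eqAB; apply/matrixP => i j; apply/eqP.
by rewrite -(eqr_pMn2r k_gt0) -!mulmxnE eqAB.
Qed.

Lemma det_neq0_of_mulmx_scalar (R : idomainType) n (A M : 'M[R]_n) k :
  A *m M = k%:M -> k != 0 -> \det A != 0.
Proof.
move=> AM k_neq0; have := expf_neq0 n k_neq0.
by rewrite -det_scalar -AM det_mulmx mulf_eq0 negb_or => /andP[].
Qed.

Lemma det_dvd_of_mulmx_scalar n (A M : 'M[int]_n) k :
  A *m M = k%:M -> (\det A %| k ^+ n)%Z.
Proof.
by move=> AM; apply/dvdzP; exists (\det M); rewrite mulrC -det_mulmx AM det_scalar.
Qed.

Section Invariants.

Variables (gT : finGroupType) (G : {group gT}) (n : nat) (rho : gT -> 'M[int]_n).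

Local Notation Zbasis := (is_Zbasis_of_invariants G rho).

Lemma Zbasis_factor r (b : 'M_(n, r)) m (M : 'M_(n, m)) :
  Zbasis b -> (forall j, G_invariant G rho (col j M)) -> exists Y, M = b *m Y.
Proof.
move=> [_ [_ b_span]] M_inv.
have /fin_all_exists [c defM] j : exists c, col j M = b *m c by apply: b_span.
exists (\matrix_(i, j) c j i 0); apply/col_matrixP => j.
by rewrite col_mul defM; congr (_ *m _); apply/colP => i; rewrite !mxE.
Qed.

Lemma Zbasis_mul_eq0 r (b : 'M_(n, r)) m (M : 'M_(r, m)) :
  Zbasis b -> b *m M = 0 -> M = 0.
Proof.
move=> [_ [b_inj _]] bM0; apply/col_matrixP => j.
by rewrite linear0 (b_inj (col j M)) // -col_mul bM0 linear0.
Qed.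

Lemma Zbasis_rank_gt0 r (b : 'M_(n, r)) v :
  Zbasis b -> G_invariant G rho v -> v != 0 -> (0 < r)%N.
Proof.
move=> [_ [_ b_span]] /b_span[c ->]; rewrite lt0n.
by apply: contraNneq => r0; subst r; rewrite flatmx0 mulmx0.
Qed.

Hypothesis rhoM : {in G &, {morph rho : x y / (x * y)%g >-> x *m y}}.

Definition sum_rho := \sum_(h in G) rho h.

Lemma mul_rho_sum g : g \in G -> rho g *m sum_rho = sum_rho.
Proof.
move=> gG; rewrite mulmx_sumr [RHS](reindex_inj (mulgI g)) /=.
by apply: eq_big => [h | h hG]; rewrite ?groupMl ?rhoM.
Qed.

Lemma G_invariant_col_sum_rho j : G_invariant G rho (col j sum_rho).
Proof. by move=> g gG; rewrite -col_mul mul_rho_sum. Qed.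

Lemma sum_rho_invariant v : G_invariant G rho v -> sum_rho *m v = v *+ #|G|.
Proof.
by move=> v_inv; rewrite mulmx_suml -sumr_const; apply: eq_bigr => h /v_inv.
Qed.

Lemma G_invariant_kerP v :
  G_invariant G rho v <-> (sum_rho - #|G|%:R%:M) *m v = 0.
Proof.
rewrite mulmxBl mul_scalar_mx scaler_nat; split=> [/sum_rho_invariant-> | ].
  by rewrite subrr.
move=> /eqP; rewrite subr_eq0 => /eqP Nv g gG; apply: (mulmxnI (cardG_gt0 G)).
by rewrite /= -Nv -{1}(mul_rho_sum gG) -mulmxA Nv -scaler_nat -scalemxAr scaler_nat.
Qed.

Lemma exists_Zbasis_linv :
  exists r (b : 'M_(n, r)) (W : 'M_(r, n)), Zbasis b /\ W *m b = 1%:M.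
Proof.
have [r [b [W [Wb Nb b_span]]]] := int_kernel_basis (sum_rho - #|G|%:R%:M).
exists r, b, W; split=> //; split; [|split].
- by move=> j; apply/G_invariant_kerP; rewrite -col_mul Nb linear0.
- by move=> c /(congr1 (mulmx W)); rewrite mulmxA Wb mul1mx mulmx0.
- by move=> v /G_invariant_kerP/b_span.
Qed.

Lemma Zbasis_linv r (b : 'M_(n, r)) : Zbasis b -> exists W, W *m b = 1%:M.
Proof.
move=> b_basis; have [r0 [b0 [W0 [b0_basis W0b0]]]] := exists_Zbasis_linv.
have [X defb] := Zbasis_factor b0_basis b_basis.1.
have [Y defb0] := Zbasis_factor b_basis b0_basis.1.
have YX : Y *m X = 1%:M.
  apply/eqP; rewrite -subr_eq0; apply/eqP/(Zbasis_mul_eq0 b_basis).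
  by rewrite mulmxBr mulmxA -defb0 -defb mulmx1 subrr.
by exists (Y *m W0); rewrite defb mulmxA -(mulmxA Y) W0b0 mulmx1.
Qed.

Variable B : 'M[int]_n.
Hypotheses (rho1 : rho 1%g = 1%:M)
  (rhoB : forall g, g \in G -> (rho g)^T *m B *m rho g = B).

Lemma trmx_sum_rho_form : sum_rho^T *m B = B *m sum_rho.
Proof.
have trB g : g \in G -> (rho g)^T *m B = B *m rho g^-1%g.
  by move=> gG; rewrite -{2}(rhoB gG) -!mulmxA -rhoM ?groupV // mulgV rho1 mulmx1.
rewrite linear_sum mulmx_suml mulmx_sumr [RHS](reindex_inj invg_inj) /=.
by apply: eq_big => [h | h hG]; rewrite ?groupV ?trB.
Qed.

Lemma gram_mul_scalar r (b : 'M_(n, r)) W : Zbasis b -> W *m b = 1%:M ->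
  gram B b *m (W *m sum_rho *m \adj B *m W^T) = (\det B * #|G|%:Z)%:M.
Proof.
move=> b_basis Wb; have [Y defN] := Zbasis_factor b_basis G_invariant_col_sum_rho.
have bWN : b *m W *m sum_rho = sum_rho by rewrite defN mulmxA -(mulmxA b) Wb mulmx1.
have Nb : sum_rho *m b = b *+ #|G|.
  apply/col_matrixP => j; rewrite col_mul raddfMn.
  exact/sum_rho_invariant/b_basis.1.
have -> : gram B b *m (W *m sum_rho *m \adj B *m W^T)
    = b^T *m (B *m (b *m W *m sum_rho)) *m \adj B *m W^T by rewrite /gram !mulmxA.
rewrite bWN -trmx_sum_rho_form mulmxA -trmx_mul Nb -(mulmxA _ B) mul_mx_adj.
rewrite mul_mx_scalar raddfMn -scaler_nat scalerA -scalemxAl -trmx_mul Wb trmx1.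
by rewrite scalemx1 natz.
Qed.

End Invariants.

Theorem lemma2p1 (gT : finGroupType) (G : {group gT}) (n : nat)
  (B : 'M[int]_n) (rho : gT -> 'M[int]_n) :
  (0 < n)%N ->
  is_lattice_form B ->
  form_preserving_action G rho B ->
  (exists v : 'cV[int]_n, G_invariant G rho v /\ v != 0) ->
  (exists (r : nat) (b : 'M[int]_(n, r)),
      (0 < r)%N /\ is_Zbasis_of_invariants G rho b) /\
  (forall (r : nat) (b : 'M[int]_(n, r)),
      is_Zbasis_of_invariants G rho b ->
      \det (gram B b) != 0 /\
      (\det (gram B b) %| (\det B * (#|G|%:Z)) ^+ r)%Z).
Proof.
move=> _ [_ detB_neq0] [rho1 [rhoM rhoB]] [v [v_inv v_neq0]].
split.
  have [r [b [_ [b_basis _]]]] := exists_Zbasis_linv rhoM.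
  by exists r, b; split; first exact: Zbasis_rank_gt0 b_basis v_inv v_neq0.
move=> r b b_basis; have [W Wb] := Zbasis_linv rhoM b_basis.
have gramM := gram_mul_scalar rhoM rho1 rhoB b_basis Wb.
split; last exact: det_dvd_of_mulmx_scalar gramM.
apply: det_neq0_of_mulmx_scalar gramM _.
by rewrite mulf_neq0 // -lt0n cardG_gt0.
Qed.
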